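(* For every integer $n \geq 6$, there exists a superpermutation on $n$ symbols whose length is strictly less than $\sum_{i=1}^{n} i!$. In particular, for $n=6$ there exists a superpermutation on the symbols $1,2,\dots,6$ of length $872 < 873 = \sum_{i=1}^{6} i!$.
   Context: Let $n \geq 1$ and take the symbols to be $1,2,\dots,n$. A superpermutation on $n$ symbols is a finite string over the alphabet $\{1,\dots,n\}$ that contains each of the $n!$ permutations of $1,\dots,n$ (each written as a string of length $n$ in which every symbol occurs exactly once) as a contiguous substring. The length of a superpermutation is the number of symbols in the string. *)

From mathcomp Require Import all_boot.
Set Implicit Arguments. Unset Strict Implicit. Unset Printing Implicit Defensive.

Definition is_string_on (n : nat) (s : seq nat) : bool :=
  all (fun x => (1 <= x) && (x <= n)) s.

Definition is_perm_word (n : nat) (p : seq nat) : bool :=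
  perm_eq p (iota 1 n).

Definition superperm (n : nat) (s : seq nat) : Prop :=
  is_string_on n s /\ forall p : seq nat, is_perm_word n p -> infix p s.

Definition sum_fact (n : nat) : nat := \sum_(1 <= i < n.+1) i`!.

From mathcomp Require Import all_boot.
From mathcomp Require Import zify.
Set Implicit Arguments. Unset Strict Implicit. Unset Printing Implicit Defensive.

(* Given a superpermutation s on n symbols, scan s from left to right and,
   each time a permutation p of 1..n is completed for the first time, insert
   the letters (n+1) :: p right after it.  Every permutation of 1..n+1 has the
   form b ++ (n+1) :: a with a ++ b a permutation of 1..n, and it occurs in
   p ++ (n+1) :: p for p = b ++ a.  Each of the n! permutations is inserted
   once, at a cost of n+1 letters, so the length grows by exactly (n+1)!,
   which is also the growth of sum_{i<=n} i!.  A strict inequality at n = 6,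
   witnessed by an explicit superpermutation of length 872, therefore
   propagates to every n >= 6. *)

Definition lastn (n : nat) (u : seq nat) : seq nat := drop (size u - n) u.

Definition insertion (n x : nat) (u : seq nat) (c : nat) : seq nat :=
  let w := lastn n (rcons u c) in
  if is_perm_word n w && ~~ infix w u then x :: w else [::].

Fixpoint expand_from (n x : nat) (u s : seq nat) : seq nat :=
  if s is c :: s' then c :: insertion n x u c ++ expand_from n x (rcons u c) s'
  else [::].

Definition expand (n x : nat) (s : seq nat) : seq nat := expand_from n x [::] s.

Lemma expand_from_cat n x u s1 s2 :
  expand_from n x u (s1 ++ s2) =
  expand_from n x u s1 ++ expand_from n x (u ++ s1) s2.
Proof.
elim: s1 u => [|c s1 IH] u /=; first by rewrite cats0.
by rewrite IH -catA cat_rcons.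
Qed.

Lemma expand_rcons n x u c :
  expand n x (rcons u c) = expand n x u ++ c :: insertion n x u c.
Proof. by rewrite /expand -cats1 expand_from_cat /= cats0. Qed.

Lemma expand_cat_rcons n x u c w :
  expand n x (rcons u c ++ w) =
  expand n x u ++ c :: insertion n x u c ++ expand_from n x (rcons u c) w.
Proof.
by rewrite /expand expand_from_cat -/(expand _ _ _) expand_rcons -catA.
Qed.

Lemma size_perm_word n w : is_perm_word n w -> size w = n.
Proof. by move/perm_size; rewrite size_iota. Qed.

Lemma suffix_suffixes (T : eqType) (v w s : seq T) :
  suffix v s -> suffix w s -> size v <= size w -> suffix v w.
Proof.
rewrite /suffix !prefixE => /eqP hv /eqP <- le.
by rewrite !size_rev take_takel ?size_rev // -hv size_rev.
Qed.

Lemma suffix_expand n x u v :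
  suffix v u -> size v <= n -> suffix v (expand n x u).
Proof.
elim/last_ind: u v => [//|u c IH] v.
case/lastP: v => [|v c']; first by move=> *; apply: suffix0s.
rewrite suffix_rcons => /andP[/eqP-> sv]; rewrite size_rcons => lt_vn.
rewrite expand_rcons /insertion; case: ifP => [/andP[hw _]|_].
  rewrite -[c :: _]/([:: c; x] ++ _) catA; apply: suffix_catr.
  apply: (@suffix_suffixes _ _ _ (rcons u c)); rewrite ?suffix_drop //.
    by rewrite suffix_rcons eqxx.
  by rewrite size_rcons (size_perm_word hw).
by rewrite cats1 suffix_rcons eqxx IH // ltnW.
Qed.

Lemma suffix_rcons_expand n x u c v :
  suffix v (rcons u c) -> size v <= n -> suffix v (rcons (expand n x u) c).
Proof.
case/lastP: v => [|v c']; first by move=> *; apply: suffix0s.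
rewrite !suffix_rcons size_rcons => /andP[/eqP-> sv] lt_vn.
by rewrite eqxx suffix_expand // ltnW.
Qed.

Lemma infix_first_occurrence (T : eqType) (p u : seq T) :
    p != [::] -> infix p u ->
  exists v c w, [/\ u = rcons v c ++ w, suffix p (rcons v c) & ~~ infix p v].
Proof.
move=> p_nil; elim/last_ind: u => [|u c IH].
  by rewrite infixs0 (negbTE p_nil).
rewrite infix_rconsl.
case: (boolP (infix p u)) => [/IH [v [c' [w [-> suf ni]]]] _ | ni] /=.
  by exists v, c', (rcons w c); rewrite rcons_cat.
by rewrite orbF => suf; exists u, c, [::]; rewrite cats0.
Qed.

Lemma infix_expand n x u p : 0 < n -> is_perm_word n p -> infix p u ->
  infix (p ++ x :: p) (expand n x u).
Proof.
move=> n_gt0 hp; have size_p := size_perm_word hp.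
have p_nil : p != [::] by rewrite -size_eq0 size_p -lt0n.
case/(infix_first_occurrence p_nil) => v [c [w [-> suf ni]]].
have lastn_p : lastn n (rcons v c) = p by apply/eqP; rewrite -size_p -suffixE.
rewrite expand_cat_rcons /insertion lastn_p hp ni /=.
rewrite -[expand n x v ++ _]/(expand n x v ++ [:: c] ++ _) catA cats1.
have /suffixP [z ->] := suffix_rcons_expand x suf (eq_leq size_p).
by apply/infixP; exists z, (expand_from n x (rcons v c) w); rewrite -!catA.
Qed.

Lemma count_pred1U_uniq (T : eqType) (w : T) (a : pred T) (s : seq T) :
  uniq s ->
  count (fun p => (w == p) || a p) s = count a s + ((w \in s) && ~~ a w).
Proof.
elim: s => //= y s IH /andP[ys us]; rewrite IH // in_cons.
case: (eqVneq w y) => [->|_] /=; last by rewrite addnA.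
by rewrite (negbTE ys); case: (a y); rewrite /= ?addn0 // addnAC addnC.
Qed.

Lemma size_expand n x u : 0 < n ->
  size (expand n x u) =
  size u + n.+1 * count (fun p => infix p u) (permutations (iota 1 n)).
Proof.
move=> n_gt0; elim/last_ind: u => [|u c IH].
  rewrite (@eq_in_count _ _ pred0) ?count_pred0 ?muln0 // => p.
  rewrite mem_permutations infixs0 => /size_perm_word size_p.
  by rewrite -size_eq0 size_p eqn0Ngt n_gt0.
rewrite expand_rcons size_cat /= IH size_rcons.
set perms := permutations (iota 1 n).
have -> : count (fun p => infix p (rcons u c)) perms =
          count (fun p => (lastn n (rcons u c) == p) || infix p u) perms.
  apply: eq_in_count => p; rewrite mem_permutations => /size_perm_word size_p.
  by rewrite infix_rconsl suffixE size_p orbC.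
rewrite count_pred1U_uniq ?permutations_uniq // mem_permutations /insertion.
case: ifP => /= [/andP[/size_perm_word -> _]|_]; lia.
Qed.

Lemma all_expand n x (a : pred nat) u : a x -> all a u -> all a (expand n x u).
Proof.
move=> ax; elim/last_ind: u => [//|u c IH].
rewrite all_rcons => /andP[ac au]; rewrite expand_rcons all_cat IH //= ac.
rewrite /insertion; case: ifP => //= _; rewrite ax /lastn.
by apply/allP => y /mem_drop; apply/allP; rewrite all_rcons ac.
Qed.

Lemma perm_word_rot n a b :
  is_perm_word n.+1 (a ++ n.+1 :: b) -> is_perm_word n (b ++ a).
Proof.
have iota1S : iota 1 n.+1 = iota 1 n ++ [:: n.+1].
  by rewrite -[n.+1]addn1 iotaD addnC.
rewrite /is_perm_word iota1S => hq; rewrite -(perm_cons n.+1).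
apply: (perm_trans _ (perm_trans hq _)); first by rewrite perm_sym perm_catC.
by rewrite perm_catC.
Qed.

Lemma superperm_expand n s : 0 < n -> superperm n s ->
  superperm n.+1 (expand n n.+1 s).
Proof.
move=> n_gt0 [s_on s_sup]; split.
  apply: all_expand; first by rewrite /= leqnn.
  by apply: sub_all s_on => y /andP[-> /leqW].
move=> q hq.
have q_x : n.+1 \in q by rewrite (perm_mem hq) mem_iota /= ltnS leqnn.
case/splitPr: q_x hq => a b /perm_word_rot hp.
apply: infix_trans (infix_expand _ n_gt0 hp (s_sup _ hp)).
by apply/infixP; exists b, a; rewrite -!catA.
Qed.

Lemma size_expand_superperm n s : 0 < n -> superperm n s ->
  size (expand n n.+1 s) = size s + n.+1`!.
Proof.
move=> n_gt0 [_ s_sup]; rewrite size_expand // (@eq_in_count _ _ predT).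
  by rewrite count_predT size_permutations ?iota_uniq // size_iota factS.
by move=> p; rewrite mem_permutations => /s_sup ->.
Qed.

Lemma sum_factS n : sum_fact n.+1 = sum_fact n + n.+1`!.
Proof. by rewrite /sum_fact big_nat_recr. Qed.

Lemma superperm_lt_sum_fact n0 s0 : 0 < n0 -> superperm n0 s0 ->
    size s0 < sum_fact n0 ->
  forall n, n0 <= n -> exists s, superperm n s /\ size s < sum_fact n.
Proof.
move=> n0_gt0 s0_sup s0_lt; elim=> [|n IH]; first by rewrite leqNgt n0_gt0.
rewrite leq_eqVlt ltnS => /orP[/eqP <-|le_n0n]; first by exists s0.
have [s [s_sup s_lt]] := IH le_n0n; have n_gt0 := leq_trans n0_gt0 le_n0n.
exists (expand n n.+1 s); split; first exact: superperm_expand.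
by rewrite size_expand_superperm // sum_factS ltn_add2r.
Qed.

Definition superperm6_872 : seq nat :=
  [:: 1; 2; 3; 4; 5; 6; 1; 2; 3; 4; 5; 1; 6; 2; 3; 4; 5; 1; 2; 6; 3; 4; 5; 1;
   2; 3; 6; 4; 5; 1; 3; 2; 6; 4; 5; 1; 3; 6; 2; 4; 5; 1; 3; 6; 4; 2; 5; 1; 3;
   6; 4; 5; 2; 1; 3; 6; 4; 5; 1; 2; 3; 4; 6; 5; 1; 2; 3; 4; 1; 5; 6; 2; 3; 4;
   1; 5; 2; 6; 3; 4; 1; 5; 2; 3; 6; 4; 1; 5; 2; 3; 4; 6; 1; 5; 2; 3; 4; 1; 6;
   5; 2; 3; 4; 1; 2; 5; 6; 3; 4; 1; 2; 5; 3; 6; 4; 1; 2; 5; 3; 4; 6; 1; 2; 5;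
   3; 4; 1; 6; 2; 5; 3; 4; 1; 2; 6; 5; 3; 4; 1; 2; 3; 5; 6; 4; 1; 2; 3; 5; 4;
   6; 1; 2; 3; 5; 4; 1; 6; 2; 3; 5; 4; 1; 2; 6; 3; 5; 4; 1; 2; 3; 6; 5; 4; 1;
   3; 2; 6; 5; 4; 3; 1; 2; 6; 4; 5; 3; 1; 6; 2; 4; 3; 5; 1; 6; 2; 4; 3; 1; 5;
   6; 2; 4; 3; 1; 6; 5; 2; 4; 3; 1; 6; 2; 5; 4; 3; 1; 6; 2; 4; 5; 3; 1; 6; 4;
   2; 5; 3; 1; 4; 6; 2; 5; 3; 1; 4; 2; 6; 5; 3; 1; 4; 2; 5; 6; 3; 1; 4; 2; 5;
   3; 6; 1; 4; 2; 5; 3; 1; 6; 4; 5; 2; 3; 1; 4; 6; 5; 2; 3; 1; 4; 5; 6; 2; 3;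
   1; 4; 5; 2; 6; 3; 1; 4; 5; 2; 3; 6; 1; 4; 5; 2; 3; 1; 6; 4; 5; 3; 2; 1; 6;
   4; 5; 3; 1; 2; 6; 4; 3; 5; 1; 2; 6; 4; 3; 1; 5; 2; 6; 4; 3; 1; 2; 5; 6; 4;
   3; 2; 1; 5; 6; 4; 2; 3; 1; 5; 4; 6; 2; 3; 1; 5; 4; 2; 6; 3; 1; 5; 4; 2; 3;
   6; 1; 5; 4; 2; 3; 1; 6; 5; 4; 2; 3; 1; 5; 6; 4; 2; 1; 3; 5; 6; 4; 2; 1; 5;
   3; 6; 2; 4; 1; 5; 3; 6; 2; 1; 4; 5; 3; 6; 2; 1; 5; 4; 3; 6; 2; 1; 5; 3; 4;
   6; 2; 1; 3; 5; 4; 6; 2; 1; 3; 4; 5; 6; 2; 1; 3; 4; 6; 5; 2; 1; 3; 4; 6; 2;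
   5; 1; 3; 4; 6; 2; 1; 5; 3; 6; 4; 2; 1; 5; 6; 3; 4; 2; 1; 6; 5; 3; 4; 2; 1;
   6; 3; 5; 4; 2; 1; 6; 3; 4; 5; 2; 1; 6; 3; 4; 2; 5; 1; 6; 3; 4; 2; 1; 5; 6;
   4; 3; 2; 5; 1; 6; 4; 3; 2; 5; 6; 1; 4; 3; 2; 5; 6; 4; 1; 3; 2; 5; 6; 4; 3;
   1; 2; 6; 5; 4; 3; 2; 1; 6; 5; 4; 3; 2; 6; 1; 5; 3; 4; 2; 6; 1; 3; 5; 4; 2;
   6; 1; 3; 4; 5; 2; 6; 1; 3; 4; 2; 5; 6; 1; 3; 4; 2; 6; 5; 1; 3; 4; 2; 6; 1;
   5; 3; 2; 4; 6; 5; 1; 3; 2; 4; 6; 5; 3; 1; 2; 4; 6; 3; 5; 1; 2; 4; 6; 3; 1;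
   5; 2; 4; 6; 3; 1; 2; 5; 4; 6; 3; 2; 1; 5; 4; 6; 3; 2; 5; 1; 4; 6; 3; 2; 5;
   4; 1; 6; 3; 2; 5; 4; 6; 1; 3; 2; 5; 4; 6; 3; 1; 2; 4; 5; 6; 3; 2; 1; 4; 5;
   6; 3; 2; 4; 1; 5; 6; 3; 2; 4; 5; 1; 6; 3; 2; 4; 5; 6; 1; 3; 2; 4; 5; 6; 3;
   1; 2; 4; 6; 5; 3; 2; 1; 4; 6; 5; 3; 2; 4; 1; 6; 5; 3; 2; 4; 6; 1; 5; 3; 2;
   6; 4; 1; 5; 3; 2; 6; 1; 4; 5; 3; 2; 6; 1; 5; 4; 3; 2; 6; 5; 1; 4; 3; 6; 2;
   5; 1; 4; 3; 6; 5; 2; 1; 4; 3; 5; 6; 2; 1; 4; 3; 5; 2; 6; 1; 4; 3; 5; 2; 1;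
   6; 4; 3; 5; 2; 1; 4; 6; 3; 5; 2; 1; 4; 3; 6; 5; 1; 2; 4; 3; 6; 1; 5; 2; 4;
   3; 6; 1; 2; 5; 4; 3; 6; 1; 2; 4; 5; 3; 6; 1; 2; 4; 3; 5; 6; 1; 2; 4; 3; 6;
   5; 1; 4; 2; 3; 5; 6; 1; 4; 2; 3; 5; 1; 6; 4; 2; 3; 5; 1; 4; 6; 2; 3; 5; 1;
   4; 2; 6; 3; 5; 1; 4; 2; 3; 6; 5; 1; 4; 3; 2; 6; 5; 4; 1; 3; 6; 2; 5; 4; 1;
   3; 6; 5; 2; 4; 1; 3; 5; 6; 2; 4; 1; 3; 5; 2; 6; 4; 1; 3; 5; 2; 4; 6; 1; 3;
   5; 2; 4; 1; 6; 3; 5; 2; 4; 1; 3; 6; 5; 4; 2; 1; 3; 6; 5; 4; 1; 2; 3].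
Lemma superperm_superperm6_872 : superperm 6 superperm6_872.
Proof.
split; first by vm_compute.
have all_infix : all (fun p => infix p superperm6_872) (permutations (iota 1 6)).
  by vm_compute.
by move=> p hp; apply: (allP all_infix); rewrite mem_permutations.
Qed.

Lemma size_superperm6_872 : size superperm6_872 = 872.
Proof. by []. Qed.

Lemma sum_fact6 : sum_fact 6 = 873.
Proof. by rewrite /sum_fact unlock. Qed.

Theorem mainTheorem1 :
  (forall n : nat, 6 <= n ->
     exists s : seq nat, superperm n s /\ size s < sum_fact n)
  /\ (exists s : seq nat, superperm 6 s /\ size s = 872)
  /\ sum_fact 6 = 873.
Proof.
split; last split; last exact: sum_fact6.
- apply: (superperm_lt_sum_fact _ superperm_superperm6_872) => //.
  by rewrite size_superperm6_872 sum_fact6.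
- by exists superperm6_872; split; [exact: superperm_superperm6_872|].
Qed.
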